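(* Let $m\geq 1$ and $n>2m$ be integers with $\gcd\{m,n\}=1$, and let $$P(z)=z^{n}-\frac{2n}{n-m}z^{n-m}+\frac{n}{n-2m}z^{n-2m}+c,$$ where $c\in\mathbb{C}$ satisfies $|c|\neq 0$ and $|c|\neq\frac{2m^2}{(n-m)(n-2m)}$. Then $P$ is a critically injective polynomial having only simple zeros.
   Context: A polynomial $P$ whose derivative $P'$ has distinct zeros $d_1,\dots,d_t$ is called critically injective if $P(d_i)\neq P(d_j)$ for all $i\neq j$. *)

From HB Require Import structures.
From mathcomp Require Import all_boot all_order all_algebra.
From mathcomp Require Import reals.
From mathcomp Require Export complex.
Set Implicit Arguments. Unset Strict Implicit. Unset Printing Implicit Defensive.
Import Order.TTheory GRing.Theory Num.Theory.
Local Open Scope ring_scope.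

Definition simple_zeros (F : idomainType) (P : {poly F}) : Prop :=
  forall z : F, root P z -> ~~ root P^`() z.

Definition critically_injective (F : idomainType) (P : {poly F}) : Prop :=
  forall d1 d2 : F, root P^`() d1 -> root P^`() d2 -> d1 != d2 ->
    P.[d1] != P.[d2].

From HB Require Import structures.
From mathcomp Require Import all_boot all_order all_algebra.
From mathcomp Require Import reals complex.
From mathcomp Require Import ring zify.
Set Implicit Arguments.
Unset Strict Implicit.
Unset Printing Implicit Defensive.
Import Order.TTheory GRing.Theory Num.Theory.
Local Open Scope ring_scope.

(* The coefficients are chosen so that P' = n z^(n-2m-1) (z^m - 1)^2: the
   critical points are 0 and the m-th roots of unity, with P(0) = c and
   P(z) = K z^n + c at a root of unity z, where K = 2m^2/((n-m)(n-2m)).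
   Since gcd(m, n) = 1, z |-> z^n permutes the m-th roots of unity, and
   |K z^n| = K > 0, so the critical values are pairwise distinct. A multiple
   zero would be a critical point, forcing c = 0 or |c| = K. *)

Lemma unity_root_expr_inj (R : pzSemiRingType) (m n : nat) (x y : R) :
  (0 < m)%N -> coprime m n -> x ^+ m = 1 -> y ^+ m = 1 ->
  x ^+ n = y ^+ n -> x = y.
Proof.
(* By Bezout m divides a n + 1, so x^(a n) = y^(a n) is inverse to both x and y. *)
move=> m_gt0 co_mn xm1 ym1 xyn.
have [a _] := Bezoutl n m_gt0; rewrite (eqP co_mn) => /dvdnP[k Ek].
have inv_power (w : R) : w ^+ m = 1 -> w ^+ (a * n).+1 = 1.
  by move=> wm1; rewrite -add1n Ek mulnC exprM wm1 expr1n.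
have xyan : x ^+ (a * n) = y ^+ (a * n) by rewrite mulnC !exprM xyn.
by rewrite -[x]mulr1 -(inv_power y ym1) exprSr -xyan mulrA -exprS inv_power ?mul1r.
Qed.

Lemma norm_unity_root (R : numDomainType) (m : nat) (z : R) :
  (0 < m)%N -> z ^+ m = 1 -> `|z| = 1.
Proof.
by move=> m_gt0 zm1; apply/eqP; rewrite -(pexpr_eq1 m_gt0) // -normrX zm1 normr1.
Qed.

Section CriticallyInjectivePoly.

Variables (F : numFieldType) (m n : nat).
Hypotheses (m_gt0 : (0 < m)%N) (ltn_2m_n : (2 * m < n)%N).

Definition crit_poly (c : F) : {poly F} :=
  'X^n - ((2 * n)%:R / (n - m)%:R) *: 'X^(n - m)
       + (n%:R / (n - 2 * m)%:R) *: 'X^(n - 2 * m) + c%:P.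

Definition crit_scale : F := (2 * m ^ 2)%:R / ((n - m) * (n - 2 * m))%:R.

Let nm_neq0 : (n - m)%:R != 0 :> F. Proof. by rewrite pnatr_eq0; lia. Qed.
Let n2m_neq0 : (n - 2 * m)%:R != 0 :> F. Proof. by rewrite pnatr_eq0; lia. Qed.

Lemma horner_crit_poly (c z : F) : (crit_poly c).[z] =
  z ^+ n - (2 * n)%:R / (n - m)%:R * z ^+ (n - m)
  + n%:R / (n - 2 * m)%:R * z ^+ (n - 2 * m) + c.
Proof. by rewrite !hornerE. Qed.

Lemma horner_deriv_crit_poly (c z : F) :
  (crit_poly c)^`().[z] = n%:R * z ^+ (n - 2 * m).-1 * (z ^+ m - 1) ^+ 2.
Proof.
rewrite !derivE addr0 !(hornerD, hornerN, hornerZ, hornerMn, hornerXn).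
have -> : n.-1 = ((n - 2 * m).-1 + m + m)%N by lia.
have -> : (n - m).-1 = ((n - 2 * m).-1 + m)%N by lia.
rewrite !exprD.
by field; apply/andP.
Qed.

Lemma root_deriv_crit_poly (c z : F) :
  root (crit_poly c)^`() z -> z = 0 \/ z ^+ m = 1.
Proof.
have n_eqF : (n == 0)%N = false by lia.
rewrite /root horner_deriv_crit_poly !mulf_eq0 pnatr_eq0 n_eqF !expf_eq0 subr_eq0 orbb.
by case/orP=> [/andP[_ /eqP->] | /eqP->]; [left | right].
Qed.

Lemma horner_crit_poly0 (c : F) : (crit_poly c).[0] = c.
Proof.
have n_eqF : (n == 0)%N = false by lia.
have nm_eqF : (n - m == 0)%N = false by lia.
have n2m_eqF : (n - 2 * m == 0)%N = false by lia.
by rewrite horner_crit_poly !expr0n n_eqF nm_eqF n2m_eqF !mulr0 subr0 !add0r.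
Qed.

Lemma horner_crit_poly_unity (c z : F) :
  z ^+ m = 1 -> (crit_poly c).[z] = crit_scale * z ^+ n + c.
Proof.
move=> zm1; rewrite horner_crit_poly.
have -> : z ^+ n = z ^+ (n - 2 * m) * z ^+ m * z ^+ m.
  by rewrite -!exprD; congr (_ ^+ _); lia.
have -> : z ^+ (n - m) = z ^+ (n - 2 * m) * z ^+ m.
  by rewrite -exprD; congr (_ ^+ _); lia.
(* Written in terms of n - m and n - 2m, the identity only divides by these. *)
have nE : n%:R = 2 * (n - m)%:R - (n - 2 * m)%:R :> F.
  by rewrite -natrM -natrB; [congr (_%:R); lia | lia].
have mE : m%:R = (n - m)%:R - (n - 2 * m)%:R :> F.
  by rewrite -natrB; [congr (_%:R); lia | lia].
rewrite zm1 !mulr1 /crit_scale !natrM nE mE.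
by congr (_ + c); field; apply/andP.
Qed.

Lemma crit_scale_gt0 : 0 < crit_scale.
Proof. by apply: divr_gt0; rewrite ltr0n; nia. Qed.

Lemma crit_poly_critically_injective (c : F) :
  coprime m n -> critically_injective (crit_poly c).
Proof.
move=> co_mn d1 d2.
have unity_value_neq0 z : z ^+ m = 1 -> crit_scale * z ^+ n != 0.
  move=> zm1; apply: mulf_neq0; first exact: lt0r_neq0 crit_scale_gt0.
  by rewrite expf_neq0 // -normr_eq0 (norm_unity_root m_gt0 zm1) oner_eq0.
move=> /root_deriv_crit_poly[-> | d1m1] /root_deriv_crit_poly[-> | d2m1].
- by rewrite eqxx.
- move=> _; rewrite horner_crit_poly0 horner_crit_poly_unity // eq_sym.
  by rewrite -subr_eq0 addrK unity_value_neq0.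
- move=> _; rewrite horner_crit_poly0 horner_crit_poly_unity //.
  by rewrite -subr_eq0 addrK unity_value_neq0.
- rewrite !horner_crit_poly_unity // (can_eq (addrK c)).
  rewrite (inj_eq (mulfI (lt0r_neq0 crit_scale_gt0))).
  by apply: contra_neq => /(unity_root_expr_inj m_gt0 co_mn d1m1 d2m1).
Qed.

Lemma crit_poly_simple_zeros (c : F) :
  c != 0 -> `|c| != crit_scale -> simple_zeros (crit_poly c).
Proof.
move=> c_neq0 c_neqK z; rewrite /root.
apply: contraTN => /root_deriv_crit_poly[-> | zm1].
  by rewrite horner_crit_poly0.
rewrite horner_crit_poly_unity // addrC addr_eq0; apply: contraNneq c_neqK => ->.
rewrite normrN normrM normrX (norm_unity_root m_gt0 zm1) expr1n mulr1.
by rewrite gtr0_norm ?crit_scale_gt0.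
Qed.

End CriticallyInjectivePoly.

Theorem lemma3p1 (R : realType) (m n : nat) (c : R[i])
  (hm : (1 <= m)%N) (hn : (2 * m < n)%N) (hcop : coprime m n)
  (hc0 : `|c| != 0)
  (hc1 : `|c| != (2 * m ^ 2)%:R / ((n - m) * (n - 2 * m))%:R) :
  let P : {poly R[i]} :=
    'X^n - ((2 * n)%:R / (n - m)%:R) *: 'X^(n - m)
         + (n%:R / (n - 2 * m)%:R) *: 'X^(n - 2 * m) + c%:P in
  critically_injective P /\ simple_zeros P.
Proof.
move=> P; split; first exact: crit_poly_critically_injective.
by apply: crit_poly_simple_zeros; rewrite // -normr_eq0.
Qed.
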